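(* Let $(X,\mathtt{d})$ be an instance of metric $k$-center clustering with $z$ outliers, $|X|=n$, $\gamma=z/n$, and $\epsilon>0$. If Algorithm 2 (described in the context) is run independently $O\!\left(\frac{1}{1-\gamma}\left(\frac{1+\epsilon}{\epsilon}\right)^{k-1}\right)$ times, then with constant probability at least one of the runs returns a $2$-approximation for $(k,z)_\epsilon$-center clustering on $X$, i.e.\ a set $E$ of $k$ vertices with $\phi_\epsilon(X,E)\leq 2r_{\mathtt{opt}}$.
   Context: Let $(X,\mathtt{d})$ be a finite metric space with $|X|=n$ and let $k,z$ be positive integers with $z<n$. The $k$-center clustering with $z$ outliers problem asks for $X'\subseteq X$ with $|X'|\geq n-z$ and centers $c_1,\dots,c_k\in X$ minimizing $\max_{p\in X'}\min_j\mathtt{d}(p,c_j)$; $r_{\mathtt{opt}}$ is the optimal value. For $\epsilon\geq0$ and $A\subseteq X$, $\phi_\epsilon(X,A)=\min\{\max_{p\in X'}\min_{c\in A}\mathtt{d}(p,c)\;:\;X'\subseteq X,\ |X'|\geq n-(1+\epsilon)z\}$; $\mathtt{d}(p,E)=\min_{q\in E}\mathtt{d}(p,q)$. Algorithm 2 (input $(X,\mathtt{d})$, $k$, $z$, $\epsilon>0$): Let $E=\emptyset$; set $j=1$ and add one vertex selected uniformly at random from $X$ to $E$. While $j<k$: set $j=j+1$; let $Q_j$ be the set of the $(1+\epsilon)z$ vertices of $X$ farthest from $E$; add one vertex selected uniformly at random from $Q_j$ to $E$. Output $E$. *)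

From HB Require Import structures.
From mathcomp Require Import all_boot all_order all_algebra.
Set Implicit Arguments. Unset Strict Implicit. Unset Printing Implicit Defensive.
Import Order.TTheory GRing.Theory Num.Theory.
Local Open Scope ring_scope.

Section KCenter.
Variables (R : archiRealFieldType) (X : finType) (d : X -> X -> R).

Definition is_metric : Prop :=
  [/\ forall p q, 0 <= d p q,
      forall p q, (d p q == 0) = (p == q),
      forall p q, d p q = d q p &
      forall p q r, d p r <= d p q + d q r].

Definition distE (p : X) (E : seq X) : R :=
  \big[Num.min/d p (head p E)]_(q <- E) d p q.

(* diameter of X: an upper bound for all the radii below, used as the
   neutral value of the finite minima (which always range over a nonempty
   index set) *)
Definition diam : R := \big[Num.max/0]_(p : X) \big[Num.max/0]_(q : X) d p q.

Definition radius (A : seq X) (X' : {set X}) : R :=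
  \big[Num.max/0]_(p in X') distE p A.

Definition phi_eps (z : nat) (eps : R) (A : seq X) : R :=
  \big[Num.min/diam]_(X' : {set X} |
       (#|X|%:R - (1 + eps) * z%:R <= (#|X'|%:R : R))) radius A X'.

(* r_opt : optimal value of k-center with z outliers (centers c_1..c_k in X,
   possibly repeated, i.e. a nonempty set of at most k centers) *)
Definition r_opt (k z : nat) : R :=
  \big[Num.min/diam]_(C : {set X} | (0 < #|C|)%N && (#|C| <= k)%N)
    \big[Num.min/diam]_(X' : {set X} | (#|X| - z <= #|X'|)%N)
       radius (enum C) X'.

Definition qsize (z : nat) (eps : R) : nat :=
  minn #|X| `|Num.ceil ((1 + eps) * z%:R)|%N.

(* Q is a valid rule for "the (1+eps)z vertices of X farthest from E":
   for every (nonempty) current E, Q E has the right size and every vertex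
   of Q E is at least as far from E as every vertex outside Q E.
   (Ties are broken arbitrarily by Q.) *)
Definition farthest_rule (z : nat) (eps : R) (Q : seq X -> {set X}) : Prop :=
  forall E : seq X, E != [::] ->
    #|Q E| = qsize z eps /\
    (forall p q, p \in Q E -> q \notin Q E -> distE q E <= distE p E).

Definition good (k z : nat) (eps : R) (E : seq X) : bool :=
  phi_eps z eps E <= 2 * r_opt k z.

(* probability that, from the current center list E, performing j more
   iterations of the while loop ends with a good E *)
Fixpoint succ_from (k z : nat) (eps : R) (Q : seq X -> {set X}) (j : nat)
    (E : seq X) : R :=
  match j with
  | 0 => if good k z eps E then 1 else 0
  | j'.+1 => #|Q E|%:R^-1 *
             \sum_(x in Q E) succ_from k z eps Q j' (x :: E)
  end.

(* probability that one run of Algorithm 2 returns a good E: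
   first center uniform in X, then k-1 iterations *)
Definition alg2_success (k z : nat) (eps : R) (Q : seq X -> {set X}) : R :=
  #|X|%:R^-1 * \sum_(x : X) succ_from k z eps Q k.-1 [:: x].

End KCenter.

From HB Require Import structures.
From mathcomp Require Import all_boot all_order all_algebra.
From mathcomp Require Import ring lra zify.
Set Implicit Arguments. Unset Strict Implicit. Unset Printing Implicit Defensive.
Import Order.TTheory GRing.Theory Num.Theory.
Local Open Scope ring_scope.

(* Fix an optimal solution: centres C and inliers S of radius r.  Call a
   centre c covered by E when some point of E is within r of c; once all
   centres are covered, every inlier is within 2r of E and E is good.  As
   long as E is not good, every point of Q_j is farther than 2r from E, so an
   inlier x of Q_j is close to a centre that is not yet covered, and picking
   it covers one more centre.  At most z points of Q_j are outliers and
   |Q_j| >= (1+eps)z, so x is an inlier with probability at least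
   eps/(1+eps); the first point is an inlier with probability at least
   1 - gamma.  A single run therefore succeeds with probability
   p >= (1-gamma)(eps/(1+eps))^(k-1), and T >= 1/p runs all fail with
   probability (1-p)^T <= 1/(1+Tp) <= 1/2. *)

Section Averages.
Variables (R : realFieldType) (T : finType).

Lemma card_mul_le_sum (A B : {pred T}) (f : T -> R) b :
  {subset B <= A} -> {in A, forall x, 0 <= f x} -> {in B, forall x, b <= f x} ->
  #|B|%:R * b <= \sum_(x in A) f x.
Proof.
move=> BA f0 fb; rewrite (bigID (mem B)) /=.
apply: ler_wpDr; first by apply: sumr_ge0 => x /andP[/f0].
rewrite mulr_natl -sumr_const (eq_bigl (mem B)) => [|x]; first exact: ler_sum.
by rewrite /= andbC; case: (boolP (x \in B)) => // /BA ->.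
Qed.

Lemma mean_ge0_le1 (A : {pred T}) (f : T -> R) :
  {in A, forall x, 0 <= f x <= 1} -> 0 <= #|A|%:R^-1 * \sum_(x in A) f x <= 1.
Proof.
move=> f01; have iA0 : 0 <= (#|A|%:R : R)^-1 by rewrite invr_ge0 ler0n.
rewrite mulr_ge0 ?sumr_ge0 //=; last by move=> x /f01 /andP[].
have [->|A0] := eqVneq #|A| 0%N; first by rewrite invr0 mul0r ler01.
rewrite ler_pdivrMl ?ltr0n ?lt0n // mulr1 -[X in _ <= X]mulr1 mulr_natl.
by rewrite -sumr_const; apply: ler_sum => x /f01 /andP[].
Qed.

End Averages.

Lemma bernoulli_onesubX (R : realFieldType) (p : R) (T : nat) :
  0 <= p -> p <= 1 -> (1 - p) ^+ T * (1 + T%:R * p) <= 1.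
Proof.
move=> p0 p1; elim: T => [|T IH]; first by rewrite expr0 mul0r addr0 mulr1.
rewrite exprS -mulrA mulrCA; apply: le_trans IH; apply: ler_wpM2l.
  by apply: exprn_ge0; lra.
have T0 : 0 <= T%:R :> R by exact: ler0n.
have : 0 <= (T%:R + 1) * (p * p) by apply: mulr_ge0; nra.
by rewrite -addn1 natrD; nra.
Qed.

Lemma repeat_success_ge_half (R : realFieldType) (p ps : R) (T : nat) :
  0 <= p -> p <= ps -> ps <= 1 -> 1 <= T%:R * p -> 1 / 2 <= 1 - (1 - ps) ^+ T.
Proof.
move=> p0 p_ps ps1 Tp; have := bernoulli_onesubX T p0 (le_trans p_ps ps1).
have : (1 - ps) ^+ T <= (1 - p) ^+ T by apply: lerXn2r; rewrite ?nnegrE; lra.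
have : 0 <= (1 - p) ^+ T by rewrite exprn_ge0 //; lra.
nra.
Qed.

Lemma ratio_ge_excess (R : realFieldType) (eps m a z : R) :
  0 < eps -> 0 < m -> (1 + eps) * z <= m -> m <= a + z ->
  eps / (1 + eps) <= a / m.
Proof.
move=> eps0 m0 zm maz.
rewrite ler_pdivlMr // mulrAC ler_pdivrMr; last by lra.
have : 0 <= eps * (a + z - m) by apply: mulr_ge0; lra.
nra.
Qed.

Section Distances.
Variables (R : archiRealFieldType) (X : finType) (d : X -> X -> R).

Lemma distE_le_mem p E e : e \in E -> distE d p E <= d p e.
Proof. by move=> eE; apply: ge_bigmin_seq. Qed.

Lemma distE_attained p E : E != [::] -> exists2 e, e \in E & distE d p E = d p e.
Proof.
case: E => // h t _; rewrite /distE big_seq.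
apply: (big_ind (fun y => exists2 e, e \in h :: t & y = d p e)) => [|a b|i iE].
- by exists h; rewrite ?mem_head.
- by move=> [e1 H1 ->] [e2 H2 ->]; rewrite minEle; case: ifP => _; [exists e1|exists e2].
- by exists i.
Qed.

Lemma distE_cons p x E : E != [::] -> distE d p (x :: E) <= distE d p E.
Proof.
move=> E0; have [e eE ->] := distE_attained p E0.
by apply: distE_le_mem; rewrite inE eE orbT.
Qed.

Lemma distE_le_diam p E : distE d p E <= diam d.
Proof.
apply: le_trans (bigmin_le_id _ _ _ _) _.
apply: le_trans (le_bigmax _ _ p); exact: le_bigmax.
Qed.

Lemma radius_le A (S : {set X}) m :
  0 <= m -> (forall p, p \in S -> distE d p A <= m) -> radius d A S <= m.
Proof. exact: bigmax_le. Qed.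

Lemma le_radius A (S : {set X}) p : p \in S -> distE d p A <= radius d A S.
Proof. exact: le_bigmax_cond. Qed.

Lemma radius_ge0 A (S : {set X}) : 0 <= radius d A S.
Proof. exact: bigmax_ge_id. Qed.

Lemma radius_le_diam A (S : {set X}) : radius d A S <= diam d.
Proof. by apply: radius_le => [|p _]; [exact: bigmax_ge_id|exact: distE_le_diam]. Qed.

Lemma radius_cons x E (S : {set X}) : E != [::] -> radius d (x :: E) S <= radius d E S.
Proof. by move=> E0; apply: le_bigmax2 => p _; exact: distE_cons. Qed.

Lemma phi_eps_le_radius z eps A (S : {set X}) :
  #|X|%:R - (1 + eps) * z%:R <= (#|S|%:R : R) -> phi_eps d z eps A <= radius d A S.
Proof. exact: bigmin_le_cond. Qed.

Lemma phi_eps_cons z eps x E :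
  E != [::] -> phi_eps d z eps (x :: E) <= phi_eps d z eps E.
Proof. by move=> E0; apply: le_bigmin2 => S _; exact: radius_cons. Qed.

Lemma r_opt_attained k z : (0 < k)%N -> (0 < #|X|)%N ->
  exists C : {set X}, exists S : {set X},
  [/\ (0 < #|C|)%N, (#|C| <= k)%N, (#|X| - z <= #|S|)%N &
      radius d (enum C) S = r_opt d k z].
Proof.
move=> k0 /card_gt0P [x0 _]; rewrite /r_opt.
pose P (C : {set X}) := (0 < #|C|)%N && (#|C| <= k)%N.
pose F (C : {set X}) := \big[Num.min/diam d]_(S : {set X} | (#|X| - z <= #|S|)%N) radius d (enum C) S.
have C0 : P [set x0] by rewrite /P cards1.
have [C /andP[C1 Ck] ->] := eq_bigmin [set x0] P F C0 (fun C _ => bigmin_le_id _ _ _ _).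
have S0 : (#|X| - z <= #|[set: X]|)%N by rewrite cardsT leq_subr.
rewrite /F; have [S Sz ->] := eq_bigmin [set: X] (fun S : {set X} => (#|X| - z <= #|S|)%N)
  (radius d (enum C)) S0 (fun S _ => radius_le_diam (enum C) S).
by exists C, S.
Qed.

End Distances.

Section SuccessProbability.
Variables (R : archiRealFieldType) (X : finType) (d : X -> X -> R) (k z : nat)
  (eps : R) (Q : seq X -> {set X}).

Lemma succ_from_ge0_le1 j E : 0 <= succ_from d k z eps Q j E <= 1.
Proof.
elim: j E => [|j IH] E /=; first by case: ifP; rewrite ?ler01 ?lexx.
by apply: mean_ge0_le1 => x _; exact: IH.
Qed.

Lemma alg2_success_ge0_le1 : 0 <= alg2_success d k z eps Q <= 1.
Proof. by apply: mean_ge0_le1 => x _; exact: succ_from_ge0_le1. Qed.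

End SuccessProbability.

Section FarthestFirst.
Variables (R : archiRealFieldType) (X : finType) (d : X -> X -> R) (k z : nat)
  (eps : R) (Q : seq X -> {set X}).
Hypotheses (dm : is_metric d) (z_gt0 : (0 < z)%N) (z_lt_n : (z < #|X|)%N)
  (eps_gt0 : 0 < eps) (farQ : farthest_rule d z eps Q).

Local Notation r := (r_opt d k z).
Local Notation good := (good d k z eps).
Local Notation succ := (succ_from d k z eps Q).
Local Notation zeps := ((1 + eps) * z%:R).
Local Notation q := (eps / (1 + eps)).

Lemma eps1_gt0 : 0 < 1 + eps.
Proof. by rewrite addr_gt0. Qed.

Lemma zeps_ge0 : 0 <= zeps.
Proof. by rewrite mulr_ge0 ?ler0n ?ltW ?eps1_gt0. Qed.

Lemma q_ge0 : 0 <= q.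
Proof. by rewrite divr_ge0 ?ltW ?eps1_gt0. Qed.

Lemma q_le1 : q <= 1.
Proof. by rewrite ler_pdivrMr ?eps1_gt0 //; lra. Qed.

Lemma qsize_gt0 : (0 < qsize X z eps)%N.
Proof.
rewrite leq_min absz_gt0 gt_eqF ?andbT ?(ltn_trans z_gt0) //.
by rewrite ceil_gt0 mulr_gt0 ?ltr0n ?eps1_gt0.
Qed.

Lemma qsize_lt : (qsize X z eps)%:R < zeps + 1.
Proof.
apply: le_lt_trans (_ : (`|Num.ceil zeps|%N)%:R < _); first by rewrite ler_nat geq_minr.
rewrite natr_absz ger0_norm ?ceil_ge0; last by have := zeps_ge0; lra.
by have := ceilB1_lt zeps; rewrite intrB /=; lra.
Qed.

Lemma phi_eps_le0 E : #|X|%:R < zeps -> phi_eps d z eps E <= 0.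
Proof.
move=> nz; apply: le_trans (phi_eps_le_radius d E (S := set0) _) _.
  by rewrite cards0; lra.
by apply: radius_le => // p; rewrite in_set0.
Qed.

Section OptimalSolution.
Variables (C S : {set X}).
Hypotheses (C_gt0 : (0 < #|C|)%N) (C_le_k : (#|C| <= k)%N)
  (S_inliers : (#|X| - z <= #|S|)%N) (CS_opt : radius d (enum C) S = r).

Definition covered (E : seq X) := [set c in C | has (fun e => d c e <= r) E].

Lemma r_opt_ge0 : 0 <= r.
Proof. by rewrite -CS_opt radius_ge0. Qed.

Lemma inlier_near_center x : x \in S -> exists2 c, c \in C & d x c <= r.
Proof.
move=> xS; have [|c cC dc] := distE_attained d x (E := enum C).
  by rewrite -size_eq0 -cardE -lt0n.
by exists c; [rewrite -mem_enum | rewrite -dc -CS_opt le_radius].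
Qed.

Lemma card_inliers : #|X|%:R - z%:R <= #|S|%:R :> R.
Proof. by rewrite lerBlDr -natrD ler_nat; lia. Qed.

Lemma good_of_covered E : (#|C| <= #|covered E|)%N -> good E.
Proof.
move=> CE; have r0 := r_opt_ge0.
have HC : covered E = C.
  by apply/eqP; rewrite eqEcard CE andbT; apply/subsetP => c; rewrite inE => /andP[].
apply: le_trans (phi_eps_le_radius d E (S := S) _) _.
  have := card_inliers; have : 0 <= eps * z%:R by rewrite mulr_ge0 ?ler0n ?ltW.
  lra.
apply: radius_le => [|p pS]; first lra.
have [c] := inlier_near_center pS; rewrite -{1}HC inE => /andP[_ /hasP[e eE dce]] dpc.
apply: le_trans (distE_le_mem d _ eE) _.
by case: dm => _ _ _ tri; apply: le_trans (tri p c e) _; lra.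
Qed.

Lemma good_cons x E : E != [::] -> good E -> good (x :: E).
Proof. by move=> E0; apply: le_trans; apply: phi_eps_cons. Qed.

Lemma zeps_le_qsize E : ~~ good E -> zeps <= (qsize X z eps)%:R.
Proof.
move=> Ebad; rewrite /qsize; case: leqP => [nz|_].
  rewrite leNgt; apply: contra Ebad => /phi_eps_le0 le0.
  by apply: le_trans (le0 E) _; rewrite mulr_ge0 ?r_opt_ge0.
rewrite natr_absz ger0_norm ?ceil_ge // ceil_ge0.
by have := zeps_ge0; lra.
Qed.

(* Otherwise p and the n - |Q E| points outside Q E, more than
   n - (1+eps)z points in all, would be within 2r of E. *)
Lemma far_of_not_good E p : E != [::] -> ~~ good E -> p \in Q E -> 2 * r < distE d p E.
Proof.
move=> E0 Ebad pQ; rewrite ltNge; apply: contra Ebad => hp.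
have [Qsize Qfar] := farQ E0.
pose T := [set y | distE d y E <= 2 * r].
have : p |: ~: Q E \subset T.
  apply/subsetP => y; rewrite !inE => /orP[/eqP->|yQ] //.
  exact: le_trans (Qfar p y pQ yQ) hp.
move/subset_leq_card; rewrite cardsU1 inE pQ /= => cT.
have : (#|X| + 1 <= #|T| + #|Q E|)%N by have := cardsC (Q E); lia.
rewrite -(ler_nat R) !natrD Qsize => cnt.
apply: le_trans (phi_eps_le_radius d E (S := T) _) _.
  by have := qsize_lt; lra.
by apply: radius_le => [|y]; [have := r_opt_ge0; lra | rewrite inE].
Qed.

Lemma card_le_inliers (A : {set X}) : (#|A| <= #|A :&: S| + z)%N.
Proof.
have := cardsID S A; have := cardsC S.
have : (#|A :\: S| <= #|~: S|)%N by rewrite subset_leq_card // setDE subsetIr.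
lia.
Qed.

Lemma covered_cons E x : E != [::] -> ~~ good E -> x \in Q E -> x \in S ->
  (#|covered E| < #|covered (x :: E)|)%N.
Proof.
move=> E0 Ebad xQ xS; apply/proper_card/properP; split.
  by apply/subsetP => c; rewrite !inE => /andP[-> /= ->]; rewrite orbT.
have [c cC dxc] := inlier_near_center xS.
case: dm => _ _ sym tri.
exists c; first by rewrite inE cC /= sym dxc.
rewrite inE cC /=; apply/hasP => -[e eE dce].
have := far_of_not_good E0 Ebad xQ; have := distE_le_mem d x eE.
have := tri x c e; lra.
Qed.

Lemma succ_from_good j E : E != [::] -> good E -> succ j E = 1.
Proof.
elim: j E => [|j IH] E E0 Egood /=; first by rewrite Egood.
rewrite (eq_bigr (fun _ => 1)) => [|x _]; last by rewrite IH ?good_cons.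
rewrite sumr_const mulVf // pnatr_eq0 -lt0n.
by have [-> _] := farQ E0; exact: qsize_gt0.
Qed.

Lemma inlier_ratio E : E != [::] -> ~~ good E ->
  q <= #|Q E :&: S|%:R / #|Q E|%:R.
Proof.
move=> E0 Ebad; have [Qsize _] := farQ E0.
apply: (@ratio_ge_excess _ _ _ _ z%:R) => //.
- by rewrite ltr0n Qsize qsize_gt0.
- by rewrite Qsize; exact: (zeps_le_qsize Ebad).
- by rewrite -natrD ler_nat card_le_inliers.
Qed.

Lemma succ_from_ge j E : E != [::] -> (#|C| <= #|covered E| + j)%N ->
  q ^+ j <= succ j E.
Proof.
elim: j E => [|j IH] E E0 CE.
  by rewrite addn0 in CE; rewrite /= good_of_covered.
have [Egood|Ebad] := boolP (good E).
  by rewrite succ_from_good // exprn_ile1 ?q_ge0 ?q_le1.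
rewrite /= exprSr; apply: le_trans (ler_wpM2l (exprn_ge0 _ q_ge0) (inlier_ratio E0 Ebad)) _.
rewrite mulrA mulrC (mulrC (q ^+ j)) ler_wpM2l ?invr_ge0 ?ler0n //.
apply: card_mul_le_sum => [x|x _|x]; first by rewrite inE => /andP[].
  by case/andP: (succ_from_ge0_le1 d k z eps Q j (x :: E)).
rewrite inE => /andP[xQ xS]; apply: IH => //.
by have := covered_cons E0 Ebad xQ xS; lia.
Qed.

Lemma alg2_success_ge :
  (1 - z%:R / #|X|%:R) * q ^+ k.-1 <= alg2_success d k z eps Q.
Proof.
have n0 : 0 < #|X|%:R :> R by rewrite ltr0n; lia.
have -> : 1 - z%:R / #|X|%:R = (#|X|%:R : R)^-1 * (#|X|%:R - z%:R) by field; lra.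
rewrite -mulrA ler_wpM2l ?invr_ge0 ?ler0n //.
apply: le_trans (card_mul_le_sum (B := mem S) (b := q ^+ k.-1) _ _ _) => [|//|x _|x xS].
- by rewrite ler_wpM2r ?exprn_ge0 ?q_ge0 //; exact: card_inliers.
- by case/andP: (succ_from_ge0_le1 d k z eps Q k.-1 [:: x]).
- apply: succ_from_ge => //.
  have [c cC dxc] := inlier_near_center xS.
  have : (0 < #|covered [:: x]|)%N.
    by apply/card_gt0P; exists c; rewrite inE cC /=; case: dm => _ _ -> _; rewrite dxc.
  lia.
Qed.

End OptimalSolution.

End FarthestFirst.

Theorem corollary9 (R : archiRealFieldType) :
  exists (C c : R), 0 < C /\ 0 < c /\
  forall (X : finType) (d : X -> X -> R) (k z : nat) (eps : R)
         (Q : seq X -> {set X}) (T : nat),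
    is_metric d -> (0 < k)%N -> (0 < z)%N -> (z < #|X|)%N -> 0 < eps ->
    farthest_rule d z eps Q ->
    C * (1 - z%:R / #|X|%:R)^-1 * ((1 + eps) / eps) ^+ k.-1 <= T%:R ->
    c <= 1 - (1 - alg2_success d k z eps Q) ^+ T.
Proof.
exists 1, (1 / 2); split; first exact: ltr01.
split; first by rewrite divr_gt0 ?ltr0n.
move=> X d k z eps Q T dm k0 z0 zn eps0 farQ hT.
have [C [S [C0 Ck Sz CS]]] := r_opt_attained d z k0 (ltn_trans z0 zn).
have := alg2_success_ge dm z0 zn eps0 farQ C0 Ck Sz CS.
have /andP[_ ps1] := alg2_success_ge0_le1 d k z eps Q.
set p := (_ * _) => p_ps.
have p0 : 0 < p.
  have gamma_lt1 : z%:R / #|X|%:R < 1 :> R by rewrite ltr_pdivrMr ?mul1r ?ltr_nat ?ltr0n //; lia.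
  by rewrite mulr_gt0 ?exprn_gt0 ?divr_gt0 ?subr_gt0 ?addr_gt0.
apply: repeat_success_ge_half (ltW p0) p_ps ps1 _.
move: hT; rewrite mul1r -[(1 + eps) / eps]invf_div exprVn -invfM -/p.
by move=> /(ler_wpM2r (ltW p0)); rewrite mulVf ?gt_eqF.
Qed.
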